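(* Let $n\ge 2$, and let $L=(\ell_1,\dots,\ell_n)\in\mathbb{R}^n$ and $K=(k_1,\dots,k_n)\in\mathbb{R}^n$ satisfy $0<k_i<\ell_i$ for all $1\le i\le n$. Let $\Lambda\subset\mathbb{R}^n$ be the lattice generated by the rows of the $n\times n$ matrix $$\mathbf{G}=\begin{bmatrix} \ell_1 & -k_2 & 0 & \cdots & 0 & 0\\ 0 & \ell_2 & -k_3 & \cdots & 0 & 0\\ \vdots & & \ddots & \ddots & & \vdots\\ 0 & 0 & \cdots & \ell_{n-2} & -k_{n-1} & 0\\ 0 & 0 & \cdots & 0 & \ell_{n-1} & -k_n\\ -k_1 & 0 & \cdots & 0 & 0 & \ell_n \end{bmatrix},$$ i.e. row $i$ ($1\le i\le n-1$) has $\ell_i$ in column $i$ and $-k_{i+1}$ in column $i+1$, and row $n$ has $-k_1$ in column $1$ and $\ell_n$ in column $n$, all other entries being $0$. Then $\Lambda$ is a lattice tiling of $\mathbb{R}^n$ with $\mathcal{S}_{L,K}$.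
   Context: For $L,K\in\mathbb{R}^n$ with $0<k_i<\ell_i$, the $n$-dimensional chair is $\mathcal{S}_{L,K}=\{(x_1,\dots,x_n)\in\mathbb{R}^n: 0\le x_i<\ell_i \text{ for all } i, \text{ and there exists } j \text{ with } x_j<\ell_j-k_j\}$. For a set $\mathcal{S}\subset\mathbb{R}^n$ and $U\in\mathbb{R}^n$, $U+\mathcal{S}=\{U+X: X\in\mathcal{S}\}$. A set $P\subseteq\mathbb{R}^n$ is a packing of $\mathbb{R}^n$ with $\mathcal{S}$ if the translates $X+\mathcal{S}$, $X\in P$, have pairwise non-intersecting interiors; it is a tiling if moreover the union of the closures of these translates is $\mathbb{R}^n$. A lattice is the set of all integer linear combinations of $n$ linearly independent vectors of $\mathbb{R}^n$ (its basis); a lattice $\Lambda$ is a lattice tiling with $\mathcal{S}$ if its point set is a tiling with $\mathcal{S}$. *)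

From HB Require Import structures.
From mathcomp Require Import all_boot all_order all_algebra.
From mathcomp Require Import all_classical all_reals all_analysis.
Set Implicit Arguments. Unset Strict Implicit. Unset Printing Implicit Defensive.
Import Order.TTheory GRing.Theory Num.Theory.
Import numFieldNormedType.Exports.
Local Open Scope classical_set_scope.
Local Open Scope ring_scope.

Definition chair (R : realType) (n : nat) (L K : 'rV[R]_n) : set 'rV[R]_n :=
  [set x | (forall i, 0 <= x ord0 i /\ x ord0 i < L ord0 i) /\
           (exists j, x ord0 j < L ord0 j - K ord0 j)].

Definition translate (R : realType) (n : nat) (U : 'rV[R]_n) (S : set 'rV[R]_n)
  : set 'rV[R]_n := [set U + x | x in S].

Definition is_packing (R : realType) (n : nat) (P S : set 'rV[R]_n) : Prop :=
  forall X Y, P X -> P Y -> X <> Y ->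
    interior (translate X S) `&` interior (translate Y S) = set0.

Definition is_tiling (R : realType) (n : nat) (P S : set 'rV[R]_n) : Prop :=
  is_packing P S /\ \bigcup_(X in P) closure (translate X S) = setT.

Definition lattice_of (R : realType) (n : nat) (B : 'M[R]_n) : set 'rV[R]_n :=
  [set v | exists z : 'I_n -> int, v = \sum_(i < n) (z i)%:~R *: row i B].

Definition lattice_tiling (R : realType) (n : nat) (B : 'M[R]_n) (S : set 'rV[R]_n)
  : Prop := row_free B /\ is_tiling (lattice_of B) S.

Definition chairG (R : realType) (n : nat) (L K : 'rV[R]_n) : 'M[R]_n :=
  \matrix_(i < n, j < n)
    if j == i then L ord0 i
    else if (j : nat) == ((i : nat).+1 %% n)%N then - K ord0 j else 0.

From mathcomp Require Import all_boot all_order all_algebra.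
From mathcomp Require Import all_classical all_reals all_analysis.
From mathcomp Require Import zify ring lra.
Set Implicit Arguments. Unset Strict Implicit. Unset Printing Implicit Defensive.
Import Order.TTheory GRing.Theory Num.Theory.
Import numFieldNormedType.Exports.
Local Open Scope ring_scope.

(* Write a lattice point as z G with z in Z^n (indices taken cyclically).
   Coordinatewise, x - z G lies in the box [0, L) exactly when
   z_j = f_j (z_(j-1)) with f_j m = floor ((x_j + K_j m) / L_j), and it avoids the
   removed corner [L - K, L) exactly when f_j (z_(j-1) + 1) <= z_j for some j.
   Each f_j is nondecreasing with f_j (a + 1) <= f_j a + 1, hence so is the map g
   obtained by composing them once around the cycle, and the solutions z correspond
   to the integers m with g m = m and g (m + 1) <= m.  Such an m exists by a discrete
   intermediate value argument, and it is unique since g (m + 1 + d) <= g (m + 1) + d.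
   The rows of G are independent because at a coordinate j where |u_j| is maximal,
   u G = 0 gives L_j |u_j| = K_j |u_(j-1)| <= K_j |u_j|, forcing u = 0. *)

Lemma int_crossing (g : int -> int) (a b : int) :
  a <= b -> a <= g a -> g b < b -> exists m, m <= g m /\ g (m + 1) < m + 1.
Proof.
move=> le_ab; have [N ->] : exists N : nat, b = a + N%:Z.
  by exists `|b - a|%N; rewrite gez0_abs ?subr_ge0 // addrCA subrr addr0.
elim: N a {le_ab} => [|N IH] a ga gb; first by move: gb; rewrite addr0 ltNge ga.
have [ga1|] := leP (a + 1) (g (a + 1)); last by exists a.
by move: gb; rewrite (_ : a + N.+1%:Z = a + 1 + N%:Z); [exact: IH | lia].
Qed.

Lemma ord_pred0 n : ord_pred (ord0 : 'I_n.+1) = ord_max.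
Proof. by apply: val_inj; rewrite /= modn_small. Qed.

Lemma ord_pred_inordS n k : (k < n)%N -> ord_pred (inord k.+1 : 'I_n.+1) = inord k.
Proof.
move=> lt_kn; have lt_k : (k < n.+1)%N by rewrite ltnS ltnW.
apply: val_inj; rewrite /= !inordK ?ltnS //.
by rewrite addSn /= modnDr modn_small.
Qed.

Lemma eq_succ_modn_ord_pred n (i j : 'I_n) :
  ((j : nat) == (i.+1 %% n)%N) = (i == ord_pred j).
Proof.
rewrite -[(_ %% _)%N]/(val (ordS i)) val_eqE.
by apply/eqP/eqP => [->|->]; rewrite ?ordSK ?ord_predK.
Qed.

Lemma ord_pred_neq n (j : 'I_n.+1) : (0 < n)%N -> ord_pred j != j.
Proof.
move=> n_gt0; rewrite -val_eqE /=; case: j => [[|k] lt_k] /=.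
  by rewrite modn_small // gtn_eqF.
by rewrite modnDr modn_small ?(ltnW lt_k) // ltn_eqF.
Qed.

Section CyclicSystem.
Variables (n : nat) (f : 'I_n.+1 -> int -> int).
Hypothesis f_mono : forall j a b, a <= b -> f j a <= f j b.
Hypothesis f_succ_le : forall j a, f j (a + 1) <= f j a + 1.

Fixpoint chain (m : int) (k : nat) : int :=
  if k is k'.+1 then f (inord k) (chain m k') else m.

Definition cycle_map (m : int) : int := f ord0 (chain m n).

Definition cyclic_solution (z : 'I_n.+1 -> int) : Prop :=
  (forall j, z j = f j (z (ord_pred j))) /\
  exists j, f j (z (ord_pred j) + 1) <= z j.

Lemma f_addn_le j a (d : nat) : f j (a + d%:Z) <= f j a + d%:Z.
Proof.
elim: d => [|d IH]; first by rewrite !addr0.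
rewrite -addn1 PoszD addrA (le_trans (f_succ_le _ _)) //.
by rewrite addrA lerD2r.
Qed.

Lemma chain_mono a b k : a <= b -> chain a k <= chain b k.
Proof. by move=> le_ab; elim: k => [|k IH] //=; apply: f_mono. Qed.

Lemma chain_addn_le a (d : nat) k : chain (a + d%:Z) k <= chain a k + d%:Z.
Proof. by elim: k => [|k IH] //=; apply: le_trans (f_addn_le _ _ _); apply: f_mono. Qed.

Lemma cycle_map_mono a b : a <= b -> cycle_map a <= cycle_map b.
Proof. by move=> le_ab; apply/f_mono/chain_mono. Qed.

Lemma cycle_map_addn_le a (d : nat) : cycle_map (a + d%:Z) <= cycle_map a + d%:Z.
Proof. by apply: le_trans (f_addn_le _ _ _); apply/f_mono/chain_addn_le. Qed.

Lemma cyclic_solution_chain z : cyclic_solution z ->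
  forall k, (k <= n)%N -> z (inord k) = chain (z ord0) k.
Proof.
case=> zE _; elim=> [|k IH] lt_kn /=; first by congr z; apply: val_inj; rewrite /= inordK.
by rewrite zE ord_pred_inordS // IH // ltnW.
Qed.

Lemma cyclic_solution_chain_last z :
  cyclic_solution z -> z (ord_pred ord0) = chain (z ord0) n.
Proof.
move=> zS; rewrite -(cyclic_solution_chain zS (leqnn n)) ord_pred0.
by congr z; apply: val_inj; rewrite /= inordK.
Qed.

Lemma cyclic_solution_cycle_map z : cyclic_solution z -> cycle_map (z ord0) = z ord0.
Proof.
by move=> zS; rewrite /cycle_map -cyclic_solution_chain_last //; case: zS => <-.
Qed.

Lemma cyclic_solution_cycle_map_succ z :
  cyclic_solution z -> cycle_map (z ord0 + 1) <= z ord0.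
Proof.
move=> zS; have [zE [j slack_j]] := zS; set m := z ord0.
have chain_succ k : chain (m + 1) k <= chain m k + 1 by apply: (chain_addn_le m 1).
have [j0|j_gt0] := posnP j.
  have ej : j = ord0 by apply: val_inj.
  rewrite ej in slack_j; apply: le_trans slack_j.
  by rewrite cyclic_solution_chain_last //; apply/f_mono/chain_succ.
have caught_up k : (j <= k <= n)%N -> chain (m + 1) k <= chain m k.
  elim: k => [|k IH]; first by rewrite leqn0 => /andP[/eqP j0]; rewrite j0 in j_gt0.
  rewrite leq_eqVlt => /andP[/orP[/eqP ejk|lt_jk] lt_kn] /=; last first.
    by apply/f_mono/IH; rewrite -ltnS lt_jk ltnW.
  have ej : j = inord k.+1 by apply: val_inj; rewrite /= inordK // -ejk.
  have e_pred : z (ord_pred j) = chain m k.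
    by rewrite ej ord_pred_inordS // (cyclic_solution_chain zS (ltnW lt_kn)).
  rewrite -ej -e_pred -zE; apply: le_trans slack_j; apply: f_mono.
  by rewrite e_pred chain_succ.
rewrite /m -{2}(cyclic_solution_cycle_map zS); apply/f_mono/caught_up.
by rewrite -ltnS ltn_ord leqnn.
Qed.

Lemma cyclic_solution_head_le z w :
  cyclic_solution z -> cyclic_solution w -> z ord0 <= w ord0.
Proof.
move=> zS wS; rewrite leNgt; apply/negP => lt_wz.
have [d ed] : exists d : nat, z ord0 = w ord0 + 1 + d%:Z.
  by exists (absz (z ord0 - w ord0 - 1)%R); rewrite gez0_abs; lia.
have := cycle_map_addn_le (w ord0 + 1) d.
rewrite -ed (cyclic_solution_cycle_map zS).
have := cyclic_solution_cycle_map_succ wS; lia.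
Qed.

Lemma cyclic_solution_unique z w : cyclic_solution z -> cyclic_solution w -> z =1 w.
Proof.
move=> zS wS j; have le_jn : (j <= n)%N by rewrite -ltnS.
rewrite -(inord_val j) (cyclic_solution_chain zS le_jn) (cyclic_solution_chain wS le_jn).
by congr chain; apply/le_anti; rewrite !cyclic_solution_head_le.
Qed.

Lemma cycle_map_ge a : (forall j, a <= f j a) -> a <= cycle_map a.
Proof.
move=> ge_a; have chain_ge k : a <= chain a k.
  by elim: k => [|k IH] //=; apply: le_trans (ge_a (inord k.+1)) (f_mono _ IH).
exact: le_trans (ge_a ord0) (f_mono _ (chain_ge n)).
Qed.

Lemma cycle_map_lt b : (forall j, f j b < b) -> cycle_map b < b.
Proof.
move=> lt_b; have chain_le k : chain b k <= b.
  by elim: k => [|k IH] //=; apply: le_trans (f_mono _ IH) (ltW (lt_b (inord k.+1))).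
exact: le_lt_trans (f_mono _ (chain_le n)) (lt_b ord0).
Qed.

Lemma fixpoint_cyclic_solution m : cycle_map m = m -> cycle_map (m + 1) <= m ->
  cyclic_solution (fun j => chain m j).
Proof.
move=> fix_m succ_m; split=> [j|].
  case ejk: (val j) => [|k].
    have -> : j = ord0 by apply: val_inj.
    by rewrite ord_pred0 /= -[LHS]fix_m.
  have lt_kn : (k < n)%N by rewrite -ltnS -ejk ltn_ord.
  have -> : j = inord k.+1 by apply: val_inj; rewrite /= ejk inordK.
  by rewrite ord_pred_inordS //= inordK // ltnW.
apply/existsP; apply: contraLR succ_m => /existsPn no_slack; rewrite -ltNge.
have chain_gt k : (k <= n)%N -> chain m k + 1 <= chain (m + 1) k.
  elim: k => [|k IH] // lt_kn /=; apply: le_trans (f_mono _ (IH (ltnW lt_kn))).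
  have lt_k : (k < n.+1)%N by rewrite ltnS ltnW.
  have := no_slack (inord k.+1); rewrite ord_pred_inordS // !inordK //= -ltNge; lia.
have := no_slack ord0; rewrite ord_pred0 -ltNge /=.
have := f_mono ord0 (chain_gt _ (leqnn n)); rewrite /cycle_map in fix_m *; lia.
Qed.

Lemma cyclic_solution_exists a b : a <= b -> a <= cycle_map a -> cycle_map b < b ->
  exists z, cyclic_solution z.
Proof.
move=> le_ab ge_a lt_b; have [m [ge_m lt_m1]] := int_crossing le_ab ge_a lt_b.
have fix_m : cycle_map m = m.
  by apply/le_anti; rewrite ge_m andbT -ltzD1 (le_lt_trans (cycle_map_mono (lerDl m 1))).
by exists (fun j => chain m j); apply: fixpoint_cyclic_solution => //; rewrite -ltzD1.
Qed.

End CyclicSystem.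

Local Open Scope classical_set_scope.

Section ChairLattice.
Variables (R : realType) (n : nat) (L K : 'rV[R]_n.+1).
Hypothesis n_gt0 : (0 < n)%N.

Lemma row_comb_chairG (c : 'I_n.+1 -> R) j :
  (\sum_i c i *: row i (chairG L K)) ord0 j = L ord0 j * c j - K ord0 j * c (ord_pred j).
Proof.
have pred_neq := ord_pred_neq j n_gt0.
rewrite summxE; under eq_bigr => i _ do rewrite !mxE eq_succ_modn_ord_pred.
rewrite (bigD1 j) //= eqxx (bigD1 (ord_pred j)) //= eq_sym (negbTE pred_neq) eqxx.
rewrite big1 => [|i /andP[ij ipj]]; first by ring.
by rewrite eq_sym (negbTE ij) (negbTE ipj); ring.
Qed.

Hypothesis KL : forall i, 0 < K ord0 i /\ K ord0 i < L ord0 i.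

Lemma L_gt0 j : 0 < L ord0 j.
Proof. by have [K_gt0 KL_j] := KL j; apply: lt_trans KL_j. Qed.

Lemma mulmx_chairG_eq0 (u : 'rV[R]_n.+1) : u *m chairG L K = 0 -> u = 0.
Proof.
move=> uG0; have uE j : L ord0 j * u ord0 j = K ord0 j * u ord0 (ord_pred j).
  have /eqP := congr1 (fun v : 'rV[R]_n.+1 => v ord0 j) uG0.
  by rewrite mulmx_sum_row row_comb_chairG mxE subr_eq0 => /eqP.
set jm := ([arg max_(i > ord0) `|u ord0 i|])%O.
have u_max i : `|u ord0 i| <= `|u ord0 jm|.
  by rewrite /jm; case: arg_maxP => //= j _ max_j; exact: max_j.
have : `|u ord0 jm| <= 0.
  have := u_max (ord_pred jm); have [K_gt0 KL_jm] := KL jm.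
  have : L ord0 jm * `|u ord0 jm| = K ord0 jm * `|u ord0 (ord_pred jm)|.
    by rewrite -(ger0_norm (ltW (L_gt0 jm))) -normrM uE normrM ger0_norm // ltW.
  have := normr_ge0 (u ord0 jm); have := normr_ge0 (u ord0 (ord_pred jm)); nra.
move=> u_jm_le0; apply/rowP => i; rewrite mxE; apply/normr0_eq0/le_anti.
by rewrite normr_ge0 andbT (le_trans (u_max i)).
Qed.

Lemma chairG_row_free : row_free (chairG L K).
Proof.
rewrite -kermx_eq0; apply/eqP/row_matrixP => i; rewrite row0.
by apply: mulmx_chairG_eq0; apply/sub_kermxP; exact: row_sub.
Qed.

(* The unique integer [a] with [0 <= x_j - (L_j a - K_j m) < L_j]. *)
Definition chair_step (x : 'rV[R]_n.+1) (j : 'I_n.+1) (m : int) : int :=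
  Num.floor ((x ord0 j + K ord0 j * m%:~R) / L ord0 j).

Lemma chair_step_mono x j a b : a <= b -> chair_step x j a <= chair_step x j b.
Proof.
move=> le_ab; apply: le_floor; rewrite ler_pM2r ?invr_gt0 ?L_gt0 // lerD2l.
by rewrite ler_pM2l ?ler_int //; case: (KL j).
Qed.

Lemma chair_step_succ_le x j a : chair_step x j (a + 1) <= chair_step x j a + 1.
Proof.
rewrite -ltzD1 /chair_step floor_lt_int -addrA intrD.
set u := (x ord0 j + K ord0 j * a%:~R) / L ord0 j.
have := floorD1_gt u; rewrite intrD.
have L_j := L_gt0 j; have [K_gt0 KL_j] := KL j.
have -> : (x ord0 j + K ord0 j * (a%:~R + 1)) / L ord0 j = u + K ord0 j / L ord0 j.
  by rewrite /u; field; rewrite gt_eqF.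
have : K ord0 j / L ord0 j < 1 by rewrite ltr_pdivrMr // mul1r.
lra.
Qed.

Lemma chair_stepP (x : 'rV[R]_n.+1) j (a m : int) :
  (0 <= x ord0 j - (L ord0 j * a%:~R - K ord0 j * m%:~R) < L ord0 j)
  = (a == chair_step x j m).
Proof.
have L_j := L_gt0 j.
rewrite /chair_step eq_sym floor_eq intrD ler_pdivlMr // ltr_pdivrMr //.
by apply/andP/andP => -[lo hi]; split; lra.
Qed.

Lemma chair_step_slackP (x : 'rV[R]_n.+1) j (a m : int) :
  (x ord0 j - (L ord0 j * a%:~R - K ord0 j * m%:~R) < L ord0 j - K ord0 j)
  = (chair_step x j (m + 1) <= a).
Proof.
have L_j := L_gt0 j.
by rewrite /chair_step -ltzD1 floor_lt_int !intrD ltr_pdivrMr //; apply/idP/idP => ?; lra.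
Qed.

Definition lattice_point (z : 'I_n.+1 -> int) : 'rV[R]_n.+1 :=
  \sum_i (z i)%:~R *: row i (chairG L K).

Lemma chair_sub_lattice_point (x : 'rV[R]_n.+1) z :
  chair L K (x - lattice_point z) <-> cyclic_solution (chair_step x) z.
Proof.
have coordE j : (x - lattice_point z) ord0 j =
    x ord0 j - (L ord0 j * (z j)%:~R - K ord0 j * (z (ord_pred j))%:~R).
  by rewrite !mxE /lattice_point (row_comb_chairG (fun i => (z i)%:~R)).
rewrite /chair /cyclic_solution /=; split.
  move=> [box [j slack_j]]; split; last by exists j; rewrite -chair_step_slackP -coordE.
  by move=> i; apply/eqP; rewrite -chair_stepP -coordE; apply/andP; exact: box.
move=> [zE [j slack_j]]; split; last by exists j; rewrite coordE chair_step_slackP.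
by move=> i; apply/andP; rewrite coordE chair_stepP zE.
Qed.

Lemma coord_bound (x : 'rV[R]_n.+1) :
  exists T : int, 0 <= T /\ forall j, `|x ord0 j| < (L ord0 j - K ord0 j) * T%:~R.
Proof.
have LK_gt0 j : 0 < L ord0 j - K ord0 j by rewrite subr_gt0; case: (KL j).
set s := \sum_j `|x ord0 j| / (L ord0 j - K ord0 j).
have s_ge0 : 0 <= s by apply: sumr_ge0 => j _; rewrite divr_ge0 // ltW.
exists (Num.floor s + 1); split => [|j]; first by rewrite addr_ge0 ?floor_ge0.
rewrite mulrC -ltr_pdivrMr //; apply: le_lt_trans (floorD1_gt s).
by rewrite /s (bigD1 j) //= lerDl; apply: sumr_ge0 => i _; rewrite divr_ge0 // ltW.
Qed.

Lemma chair_step_cyclic_solution (x : 'rV[R]_n.+1) :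
  exists z, cyclic_solution (chair_step x) z.
Proof.
have [T [T_ge0 xT]] := coord_bound x.
have L_pos := L_gt0; have x_le j : - `|x ord0 j| <= x ord0 j <= `|x ord0 j|.
  by rewrite -ler_norml.
apply: (cyclic_solution_exists (chair_step_mono x) (a := - T) (b := T)).
- lia.
- apply: (cycle_map_ge (chair_step_mono x)) => j.
  have := xT j; have /andP[lo hi] := x_le j.
  by rewrite /chair_step floor_ge_int ler_pdivlMr // intrN; lra.
- apply: (cycle_map_lt (chair_step_mono x)) => j.
  have := xT j; have /andP[lo hi] := x_le j.
  by rewrite /chair_step floor_lt_int ltr_pdivrMr //; lra.
Qed.

Lemma chair_lattice_packing : is_packing (lattice_of (chairG L K)) (chair L K).
Proof.
move=> _ _ [z ->] [w ->] zw; apply/seteqP; split => // p [].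
move=> /interior_subset [a chair_a pE] /interior_subset [b chair_b pE'].
have zS : cyclic_solution (chair_step p) z.
  by apply/chair_sub_lattice_point; rewrite /lattice_point -pE addrC addKr.
have wS : cyclic_solution (chair_step p) w.
  by apply/chair_sub_lattice_point; rewrite /lattice_point -pE' addrC addKr.
apply: zw; apply: eq_bigr => i _.
by rewrite (cyclic_solution_unique (chair_step_mono p) (chair_step_succ_le p) zS wS i).
Qed.

Lemma chair_lattice_covering :
  \bigcup_(X in lattice_of (chairG L K)) closure (translate X (chair L K)) = setT.
Proof.
apply/seteqP; split => // x _; have [z zS] := chair_step_cyclic_solution x.
exists (lattice_point z); first by exists z.
apply: subset_closure; exists (x - lattice_point z); last by rewrite addrC subrK.
exact/chair_sub_lattice_point.
Qed.

End ChairLattice.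

Theorem mainTheorem1 (R : realType) (n : nat) (L K : 'rV[R]_n) :
  (2 <= n)%N ->
  (forall i, 0 < K ord0 i /\ K ord0 i < L ord0 i) ->
  lattice_tiling (chairG L K) (chair L K).
Proof.
case: n L K => [|[|n]] L K // _ KL.
split; first exact: chairG_row_free.
by split; [exact: chair_lattice_packing | exact: chair_lattice_covering].
Qed.
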